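(* Let $k\le l$ be positive integers with $\gcd(k,l)=1$, let $n\ge1$ and $m\ge 0$ be integers, and write $m=qn+r$ with integers $q\ge 0$, $0\le r<n$. If $r\ge \frac{n}{q+2}$, then $$L^{k,l}(m,n)=nkq+\min\bigl(nk,\ r(k+l)\bigr).$$
   Context: $\mathcal D^{k,l}(m,n)$ denotes the set of all $nk\times nl$ matrices with nonnegative integer entries all of whose row sums equal $ml$ and all of whose column sums equal $mk$. For an $s\times t$ matrix $A=(a_{ij})$ with $s\le t$, a transversal of $A$ is a set of entries $T=\{a_{1i_1},\dots,a_{si_s}\}$ with $i_1,\dots,i_s\in\{1,\dots,t\}$ pairwise distinct, and $|T|=a_{1i_1}+\cdots+a_{si_s}$; if $s>t$, the transversals of $A$ are those of its transpose. The tropical determinant is ${\rm tdet}(A)=\max_T|T|$, and $L^{k,l}(m,n)=\min_{A\in\mathcal D^{k,l}(m,n)}{\rm tdet}(A)$. *)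

From mathcomp Require Import all_boot all_order all_algebra.
Unset Printing Implicit Defensive.

Definition inD (k l m n : nat) (A : 'M[nat]_(n * k, n * l)) : bool :=
  [forall i, \sum_(j < n * l) A i j == m * l] &&
  [forall j, \sum_(i < n * k) A i j == m * k].

Definition tdet_le (s t : nat) (A : 'M[nat]_(s, t)) : nat :=
  \max_(f : {ffun 'I_s -> 'I_t} | injectiveb f) \sum_(i < s) A i (f i).
Arguments tdet_le {s t} A.

Definition tdet (s t : nat) (A : 'M[nat]_(s, t)) : nat :=
  if s <= t then tdet_le A else tdet_le (trmx A).
Arguments tdet {s t} A.

(* Every A in D has all
   entries <= m*l (they are bounded by a row sum), so the minimum may be taken
   over matrices with entries in 'I_(m*l).+1.  The starting value
   n*k*(m*l) (the total sum of entries of any A in D) is >= tdet A for every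
   A in D, so it does not affect the minimum (and D is nonempty). *)
Definition Lkl (k l m n : nat) : nat :=
  \big[minn/(n * k * (m * l))]_(A : 'M['I_(m * l).+1]_(n * k, n * l)
        | @inD k l m n (map_mx val A)) tdet (map_mx val A).

(* By duality for the assignment problem: Egervary's theorem, which follows
   from Hall's marriage theorem by the Hungarian descent on integer potentials,
   says that [tdet A] is the least weight [sum u + sum v] of a cover
   [A i j <= u i + v j].
   Lower bound: with [s = n k] and [t = n l], the row and column sums of a
   matrix of D give [t q + r l <= t u_i + sum v] and [s q + r k <= sum u + s v_j];
   comparing [min u + min v] with [q] yields
   [sum u + sum v >= s q + min(s, r (k + l))].
   Upper bound: blowing up a symmetric n x n matrix with row sums m into k x l
   blocks gives a matrix of D.  The circulant with entries q and q+1 has the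
   cover (q+1, 0), of weight nk(q+1).  When r(k+l) < nk, replace its r x r
   corner by a circulant with row sums r(q+2) - n, which is nonnegative exactly
   when [n <= r (q + 2)]; the result has the cover (q + [a < r], [g < r]), of
   weight nkq + r(k+l). *)

From mathcomp Require Import all_boot all_order all_algebra zify.
Import Order.TTheory GRing.Theory Num.Theory.

Set Implicit Arguments.
Unset Strict Implicit.
Unset Printing Implicit Defensive.

Lemma leq_muln_sum n (F : 'I_n -> nat) c : (forall i, c <= F i) -> n * c <= \sum_i F i.
Proof. by move=> cF; rewrite -[n in n * _]card_ord -sum_nat_const leq_sum. Qed.

Lemma leq_sum_add_const n (F G : 'I_n -> nat) c :
  (forall i, F i <= c + G i) -> \sum_i F i <= n * c + \sum_i G i.
Proof.
by move=> FG; rewrite -[n in n * _]card_ord -sum_nat_const -big_split leq_sum.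
Qed.

Lemma sum_ord_ltn N e : e <= N -> \sum_(g < N) (g < e : nat) = e.
Proof.
move=> eN; rewrite (eq_bigr (fun g : 'I_N => if g < e then 1 else 0)) => [|g _].
  by rewrite -big_mkcond (big_ord_narrow eN) big_const_ord iter_addn_0 mul1n.
by case: (g < e).
Qed.

Lemma sum_ord_ltn_if N e (F : nat -> nat) c : e <= N ->
  \sum_(g < N) (if g < e then F g else c) = \sum_(g < e) F g + (N - e) * c.
Proof.
move=> eN; rewrite -(big_mkord xpredT (fun g => if g < e then F g else c)).
rewrite (big_cat_nat (leq0n e) eN) /= big_mkord.
congr (_ + _); first by apply: eq_bigr => g _; rewrite ltn_ord.
rewrite -sum_nat_const_nat; apply: eq_big_nat => g /andP[eg _].
by rewrite ltnNge eg.
Qed.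

Lemma sum_rot N a (F : nat -> nat) : 0 < N ->
  \sum_(g < N) F ((a + g) %% N) = \sum_(g < N) F g.
Proof.
move=> N0; pose h (g : 'I_N) := Ordinal (ltn_pmod (a + g) N0).
have hinj : injective h.
  move=> g g' /(congr1 val) /= /eqP; rewrite eqn_modDl !modn_small // => /eqP.
  exact: val_inj.
by rewrite [RHS](reindex_inj hinj).
Qed.

Lemma sum_divn n k (F : nat -> nat) : 0 < k ->
  \sum_(i < n * k) F (i %/ k) = k * \sum_(a < n) F a.
Proof.
move=> k0; rewrite -(big_mkord xpredT (fun i => F (i %/ k))) big_nat_mul big_distrr.
rewrite big_mkord; apply: eq_bigr => a _ /=.
rewrite (eq_big_nat _ _ (F2 := fun=> F a)) ?sum_nat_const_nat ?mulSn ?addnK //.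
move=> i /andP[aki ika]; congr F; apply/eqP.
by rewrite eqn_leq -ltnS ltn_divLR // leq_divRL // aki ika.
Qed.

Lemma big_minn_leq (I : eqType) (r : seq I) (P : pred I) (F : I -> nat) x i0 :
  i0 \in r -> P i0 -> \big[minn/x]_(i <- r | P i) F i <= F i0.
Proof.
elim: r => // a r IH; rewrite inE big_cons => /predU1P[<- -> | ri0 Pi0].
  exact: geq_minl.
by case: (P a) (IH ri0 Pi0) => // le; apply: leq_trans (geq_minr _ _) le.
Qed.

Section Hall.

Variables (I J : finType) (R : I -> J -> bool).
Implicit Types (A X Y : {set I}) (B C : {set J}).

Definition nbh (B : {set J}) (X : {set I}) : {set J} :=
  [set y in B | [exists x in X, R x y]].

Definition hall_cond (A : {set I}) (B : {set J}) : Prop :=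
  forall X : {set I}, X \subset A -> #|X| <= #|nbh B X|.

Definition matching (A : {set I}) (B : {set J}) (f : I -> J) : Prop :=
  [/\ {in A &, injective f}, {in A, forall x, f x \in B}
    & {in A, forall x, R x (f x)}].

Lemma nbh_sub B X : nbh B X \subset B.
Proof. by apply/subsetP => y; rewrite inE => /andP[]. Qed.

Lemma nbhS B X Y : X \subset Y -> nbh B X \subset nbh B Y.
Proof.
move=> sXY; apply/subsetP => y; rewrite !inE => /andP[-> /existsP[x /andP[xX Rxy]]].
by apply/existsP; exists x; rewrite (subsetP sXY).
Qed.

Lemma nbhU B X Y : nbh B (X :|: Y) = nbh B X :|: nbh B Y.
Proof.
apply/setP => y; rewrite !inE -andb_orr; congr (_ && _).
apply/existsP/orP => [[x /andP[] /[!inE] /orP[xX|xY] Rxy]|[]/existsP[x /andP[xZ Rxy]]].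
- by left; apply/existsP; exists x; rewrite xX.
- by right; apply/existsP; exists x; rewrite xY.
- by exists x; rewrite inE xZ.
- by exists x; rewrite inE xZ orbT.
Qed.

Lemma nbhD B C X : nbh (B :\: C) X = nbh B X :\: C.
Proof. by apply/setP => y; rewrite !inE andbA. Qed.

Lemma matching_glue A1 A2 B1 B2 f1 f2 :
    [disjoint B1 & B2] -> matching A1 B1 f1 -> matching A2 B2 f2 ->
  matching (A1 :|: A2) (B1 :|: B2) (fun x => if x \in A1 then f1 x else f2 x).
Proof.
move=> dB [inj1 in1 R1] [inj2 in2 R2].
have inA2 x : x \in A1 :|: A2 -> x \notin A1 -> x \in A2.
  by rewrite inE => /orP[->|].
split=> [x y xA yA | x xA | x xA]; case: ifP => xA1; try case: ifP => yA1.
- exact: inj1.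
- move=> fxy; have := in2 y (inA2 y yA (negbT yA1)).
  by rewrite -fxy (disjointFr dB (in1 x xA1)).
- move=> fxy; have := in2 x (inA2 x xA (negbT xA1)).
  by rewrite fxy (disjointFr dB (in1 y yA1)).
- by apply: inj2; apply: inA2; rewrite ?xA1 ?yA1.
- by rewrite inE in1.
- by rewrite inE in2 ?orbT // inA2 ?xA1.
- exact: R1.
- by apply: R2; rewrite inA2 ?xA1.
Qed.

Lemma hall_cond_critical_in A B X :
  hall_cond A B -> X \subset A -> hall_cond X (nbh B X).
Proof.
move=> hAB sXA Y sYX; have -> : nbh (nbh B X) Y = nbh B Y.
  apply/setP => y; rewrite [LHS]inE [RHS]inE.
  apply/andP/andP => [[/(subsetP (nbh_sub B X)) yB ->] // | [yB NYy]].
  by split=> //; apply: (subsetP (nbhS B sYX)); rewrite inE yB.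
exact/hAB/(subset_trans sYX).
Qed.

Lemma hall_cond_critical_out A B X :
    hall_cond A B -> X \subset A -> #|nbh B X| <= #|X| ->
  hall_cond (A :\: X) (B :\: nbh B X).
Proof.
move=> hAB sXA critX Y /subsetDP[sYA dYX]; rewrite nbhD.
have := hAB (X :|: Y); rewrite subUset sXA sYA nbhU => /(_ isT).
have := cardsUI X Y; rewrite setIC (disjoint_setI0 dYX) cards0 addn0 => ->.
have := cardsUI (nbh B X) (nbh B Y); have := cardsD (nbh B Y) (nbh B X).
rewrite setIC; lia.
Qed.

Lemma hall_cond_delete_edge A B a b :
    (forall X, X \proper A -> X != set0 -> #|X| < #|nbh B X|) -> a \in A ->
  hall_cond (A :\ a) (B :\ b).
Proof.
move=> surplus aA Y sYA; have [->|Y0] := eqVneq Y set0; first by rewrite cards0.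
have pYA : Y \proper A.
  rewrite properEneq (subset_trans sYA) ?subsetDl // andbT.
  by apply: contraTneq aA => <-; apply/negP => /(subsetP sYA); rewrite !inE eqxx.
have := surplus Y pYA Y0; rewrite nbhD (cardsD1 b (nbh B Y)).
by case: (b \in _) => /= h; lia.
Qed.

Theorem hall_marriage (y0 : J) A B :
  hall_cond A B -> exists f, matching A B f.
Proof.
have [n] := ubnP #|A|; elim: n A B => // n IH A B /ltnSE leAn hAB.
have [->|[a aA]] := set_0Vmem A.
  by exists (fun=> y0); split=> x; rewrite inE.
have [X /and3P[pXA X0 critX]|surplus] :=
  pickP (fun X => [&& X \proper A, X != set0 & #|nbh B X| <= #|X|]).
  have sXA := proper_sub pXA.
  have [f1 m1] := IH X (nbh B X) (leq_trans (proper_card pXA) leAn)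
    (hall_cond_critical_in hAB sXA).
  have ltAX : #|A :\: X| < #|A|.
    by rewrite cardsDS // ltn_subrL card_gt0 X0 card_gt0; apply/set0Pn; exists a.
  have [f2 m2] := IH (A :\: X) (B :\: nbh B X) (leq_trans ltAX leAn)
    (hall_cond_critical_out hAB sXA critX).
  have dB : [disjoint nbh B X & B :\: nbh B X].
    by rewrite disjoints_subset setDE setCI setCK subsetUr.
  have := matching_glue dB m1 m2.
  rewrite !setDE !setUIr !setUCr !setIT (setUidPr sXA) (setUidPr (nbh_sub _ _)).
  by move=> m; exists (fun x => if x \in X then f1 x else f2 x).
have [b] : exists b, b \in nbh B [set a].
  by apply/set0Pn; rewrite -card_gt0 (leq_trans _ (hAB _ _)) ?cards1 ?sub1set.
rewrite inE => /andP[bB /existsP[_ /andP[/set1P-> Rab]]].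
have surplus' X : X \proper A -> X != set0 -> #|X| < #|nbh B X|.
  by move=> pXA X0; have := surplus X; rewrite pXA X0 /= ltnNge => ->.
have ltAa : #|A :\ a| < #|A| by rewrite (cardsD1 a A) aA.
have [f2 m2] := IH (A :\ a) (B :\ b) (leq_trans ltAa leAn)
  (hall_cond_delete_edge b surplus' aA).
have m1 : matching [set a] [set b] (fun=> b).
  by split=> [x y /set1P-> /set1P->|x _|x /set1P->] //; apply: set11.
have dB : [disjoint [set b] & B :\ b] by rewrite disjoints1 !inE eqxx.
have := matching_glue dB m1 m2.
by rewrite !setD1K // => m; exists (fun x => if x \in [set a] then b else f2 x).
Qed.

End Hall.

Section Egervary.

Variables (T : finType) (P : T -> T -> nat).
Implicit Types (u v : T -> int) (X : {set T}).
Local Open Scope ring_scope.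

Definition covers u v : Prop := forall x y, (P x y)%:Z <= u x + v y.

Definition tight u v x y : bool := (P x y)%:Z == u x + v y.

Definition cover_weight u v : int := \sum_x u x + \sum_y v y.

Lemma cover_weight_ge0 u v : covers u v -> 0 <= cover_weight u v.
Proof.
move=> uv; rewrite /cover_weight -big_split sumr_ge0 // => x _.
exact: le_trans (uv x x).
Qed.

Lemma sum_indicator X : \sum_x (if x \in X then 1 else 0 : int) = #|X|%:R.
Proof. by rewrite -big_mkcond /= sumr_const. Qed.

Lemma tight_perfect_matching (y0 : T) u v :
    hall_cond (tight u v) setT setT ->
  exists2 f, injective f & cover_weight u v = (\sum_x P x (f x))%N%:Z.
Proof.
move=> /(hall_marriage y0)[f [finj _ ftight]].
have {}finj : injective f by move=> x y; apply: finj; rewrite inE.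
exists f => //; rewrite /cover_weight [\sum_y v y](reindex_inj finj) -big_split /=.
rewrite (big_morph Posz PoszD (erefl 0%:Z)).
by apply: eq_bigr => x _; rewrite (eqP (ftight x (in_setT x))).
Qed.

Section Shift.

Variables (u v : T -> int) (X : {set T}).
Let NX := nbh (tight u v) setT X.
Let u' x := u x - (if x \in X then 1 else 0).
Let v' y := v y + (if y \in NX then 1 else 0).

Lemma covers_shift : covers u v -> covers u' v'.
Proof.
move=> uv x y; rewrite /u' /v'; have := uv x y.
case: ifP => xX; case: ifP => yN; rewrite ?subr0 ?addr0; try lia.
suff : (P x y)%:Z != u x + v y by lia.
apply: contraFN yN => txy; rewrite /NX !inE; apply/existsP; exists x; rewrite xX.
exact: txy.
Qed.

Lemma cover_weight_shift :
  cover_weight u' v' = cover_weight u v - #|X|%:R + #|NX|%:R.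
Proof.
rewrite /cover_weight /u' /v' sumrB big_split /= !sum_indicator.
by rewrite addrACA addrA.
Qed.

End Shift.

Lemma egervary_int (y0 : T) :
  exists2 f, injective f & exists u v,
    covers u v /\ cover_weight u v <= (\sum_x P x (f x))%N%:Z.
Proof.
pose u0 x := (\max_y P x y)%N%:Z.
have cover0 : covers u0 (fun=> 0) by move=> x y; rewrite addr0 lez_nat leq_bigmax.
have [N] := ubnP `|cover_weight u0 (fun=> 0)|%N.
elim: N u0 (fun=> 0) cover0 => // N IH u v uv /ltnSE leN.
(* A set [X] violating Hall's condition for the tight graph lets the shift
   lower the nonnegative weight by [#|X| - #|nbh X|]. *)
have [X ltNX | hall] := pickP (fun X => #|nbh (tight u v) setT X| < #|X|)%N.
  apply: (IH _ _ (covers_shift X uv)); move: leN.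
  have := cover_weight_ge0 uv; have := cover_weight_ge0 (covers_shift X uv).
  rewrite cover_weight_shift; lia.
have hallT : hall_cond (tight u v) setT setT by move=> Y _; rewrite leqNgt hall.
have [f finj fw] := tight_perfect_matching y0 hallT.
by exists f => //; exists u, v; rewrite fw.
Qed.

Theorem egervary :
  exists2 f : T -> T, injective f & exists (u v : T -> nat),
    (forall x y, P x y <= u x + v y)%N /\
    (\sum_x u x + \sum_y v y <= \sum_x P x (f x))%N.
Proof.
have [y0 _|T0] := pickP (@predT T); last first.
  exists id => //; exists (fun=> 0%N), (fun=> 0%N); split=> [x|]; first by have := T0 x.
  by rewrite !sum_nat_const !muln0.
have [f finj [u [v [uv wuv]]]] := egervary_int y0.
(* Shifting by the least value of [v] makes both potentials nonnegative. *)
have [j0 _ minj0] := @arg_minP _ _ _ y0 xpredT v isT.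
have uj0 x : 0 <= u x + v j0 by apply: le_trans (uv x j0).
have vj0 y : 0 <= v y - v j0 by rewrite subr_ge0 minj0.
exists f => //; exists (fun x => absz (u x + v j0)), (fun y => absz (v y - v j0)).
split=> [x y|].
  by rewrite -lez_nat PoszD !gez0_abs //; have := uv x y; lia.
rewrite -lez_nat (le_trans _ wuv) // PoszD !(big_morph Posz PoszD (erefl 0%:Z)).
under eq_bigr do rewrite gez0_abs //.
under [X in _ + X <= _]eq_bigr do rewrite gez0_abs //.
by rewrite big_split sumrB /= addrACA subrr addr0.
Qed.

End Egervary.

Section TdetCover.

Variables (s t : nat) (A : 'M[nat]_(s, t)).

Lemma tdet_le_leq_cover (u : 'I_s -> nat) (v : 'I_t -> nat) :
  (forall i j, A i j <= u i + v j) -> tdet_le A <= \sum_i u i + \sum_j v j.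
Proof.
move=> uv; apply/bigmax_leqP => f /injectiveP finj.
apply: leq_trans (_ : \sum_i (u i + v (f i)) <= _); first exact: leq_sum.
rewrite big_split leq_add2l /= -(big_imset _ (in2W finj)) /=.
by rewrite [X in _ <= X](bigID [in f @: xpredT]) leq_addr.
Qed.

Lemma tdet_le_cover : s <= t ->
  exists (u : 'I_s -> nat) (v : 'I_t -> nat),
    (forall i j, A i j <= u i + v j) /\ \sum_i u i + \sum_j v j <= tdet_le A.
Proof.
move=> le_st; pose w := widen_ord le_st.
pose Apad (x y : 'I_t) := if insub (val x) is Some i then A i y else 0.
have ApadW i y : Apad (w i) y = A i y by rewrite /Apad /= valK.
have [f finj [u [v [uv wuv]]]] := egervary Apad.
exists (fun i => u (w i)), v; split=> [i j|]; first by rewrite -ApadW uv.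
have le_u : \sum_i u (w i) <= \sum_x u x.
  by rewrite -big_ord_narrow big_mkcond leq_sum // => x _; case: ifP.
have fwinj : injectiveb [ffun i => f (w i)].
  by apply/injectiveP => i j; rewrite !ffunE => /finj /(congr1 val) ij; apply: val_inj.
apply: leq_trans (leq_add le_u (leqnn _)) _; apply: leq_trans wuv _.
rewrite (bigID (fun x : 'I_t => x < s)) /= [X in _ + X]big1 ?addn0; last first.
  by move=> x /negbTE xs; rewrite /Apad insubF.
rewrite big_ord_narrow; apply: leq_trans (leq_bigmax_cond _ fwinj).
by apply: eq_leq; apply: eq_bigr => i _; rewrite ApadW ffunE.
Qed.

End TdetCover.

Lemma cover_sum_lower_bound s t (u : 'I_s -> nat) (v : 'I_t -> nat) q a b :
    0 < s <= t ->
    (forall i, t * q + a <= t * u i + \sum_j v j) ->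
    (forall j, s * q + b <= \sum_i u i + s * v j) ->
  s * q + minn s (a + b) <= \sum_i u i + \sum_j v j.
Proof.
case/andP=> s0 le_st row col.
pose i0 := [arg min_(i < Ordinal s0) u i].
pose j0 := [arg min_(j < Ordinal (leq_trans s0 le_st)) v j].
have Umin : s * u i0 <= \sum_i u i.
  by apply: leq_muln_sum => i; rewrite /i0; case: arg_minnP => // i1 _; apply.
have Vmin : t * v j0 <= \sum_j v j.
  by apply: leq_muln_sum => j; rewrite /j0; case: arg_minnP => // j1 _; apply.
have := row i0; have := col j0.
move: Umin Vmin; set U := \sum_i u i; set V := \sum_j v j; set x := u i0; set y := v j0.
have [lt_q_xy|le_xy_q] := ltnP q (x + y).
  have syt : s * y <= t * y by rewrite leq_mul2r le_st orbT.
  have : s * q.+1 <= s * (x + y) by rewrite leq_mul2l lt_q_xy orbT.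
  rewrite mulnDr mulnS; lia.
have sxt : s * (q - x) <= t * (q - x) by rewrite leq_mul2r le_st orbT.
have : s * q <= s * (q - x) + s * (q - y).
  by rewrite -mulnDr leq_mul2l; apply/orP; right; lia.
have -> : t * q = t * x + t * (q - x) by rewrite -mulnDr subnKC //; lia.
have -> : s * q = s * y + s * (q - y) by rewrite -mulnDr subnKC //; lia.
lia.
Qed.

Definition circulant N p e (a g : nat) : nat := p + ((a + g) %% N < e).

Lemma circulantC N p e a g : circulant N p e a g = circulant N p e g a.
Proof. by rewrite /circulant [a + g]addnC. Qed.

Lemma sum_circulant N p e a : 0 < N -> e <= N ->
  \sum_(g < N) circulant N p e a g = p * N + e.
Proof.
move=> N0 eN; rewrite big_split /= sum_nat_const card_ord mulnC.
by rewrite (sum_rot a (fun x => x < e : nat)) // sum_ord_ltn.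
Qed.

Definition corner_circulant n q r (a g : nat) : nat :=
  let c := r * (q + 2) - n in
  if (a < r) && (g < r) then circulant r (c %/ r) (c %% r) a g
  else q + (a < r) + (g < r).

Lemma corner_circulantC n q r a g :
  corner_circulant n q r a g = corner_circulant n q r g a.
Proof. by rewrite /corner_circulant andbC circulantC addnAC. Qed.

Lemma sum_corner_circulant n q r a : 0 < r < n -> n <= r * (q + 2) ->
  \sum_(g < n) corner_circulant n q r a g = q * n + r.
Proof.
case/andP=> r0 rn hn; rewrite /corner_circulant.
set c := r * (q + 2) - n; have [ar|ra] := ltnP a r; last first.
  rewrite (eq_bigr (fun g : 'I_n => if g < r then q.+1 else q)) => [|g _].
    rewrite (@sum_ord_ltn_if n r (fun=> q.+1) q) ?(ltnW rn) // big_const_ord iter_addn_0.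
    have : r * q <= n * q by rewrite leq_mul2r (ltnW rn) orbT.
    rewrite mulnBl; lia.
  by case: (g < r); rewrite /= ?addn0 ?addn1.
rewrite (eq_bigr (fun g : 'I_n => if g < r then circulant r (c %/ r) (c %% r) a g
                                  else q.+1)) => [|g _]; last first.
  by case: (g < r); rewrite /= ?addn0 ?addn1.
rewrite sum_ord_ltn_if ?(ltnW rn) // sum_circulant //; last exact/ltnW/ltn_pmod.
have : r * q.+1 <= n * q.+1 by rewrite leq_mul2r (ltnW rn) orbT.
rewrite -divn_eq /c mulnBl; lia.
Qed.

Lemma corner_circulant_cover n q r a g : 0 < n ->
  corner_circulant n q r a g <= q + (a < r) + (g < r).
Proof.
move=> n0; rewrite /corner_circulant; case: ifP => // /andP[ar gr].
set c := r * (q + 2) - n; rewrite /circulant ar gr.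
have : c %/ r < q + 2 by rewrite ltn_divLR ?(leq_ltn_trans (leq0n a) ar) // mulnC /c; lia.
by have := leq_b1 ((a + g) %% r < c %% r); lia.
Qed.

Definition blowup n k l (G : nat -> nat -> nat) : 'M[nat]_(n * k, n * l) :=
  \matrix_(i, j) G (i %/ k) (j %/ l).

Lemma blowup_inD n k l m G : 0 < k -> 0 < l ->
    (forall a g, G a g = G g a) -> (forall a, a < n -> \sum_(g < n) G a g = m) ->
  inD k l m n (blowup n k l G).
Proof.
move=> k0 l0 GC Gsum; apply/andP; split; apply/forallP => x; apply/eqP.
  have xk : x %/ k < n by rewrite ltn_divLR.
  by under eq_bigr do rewrite mxE; rewrite sum_divn // (Gsum _ xk) mulnC.
have xl : x %/ l < n by rewrite ltn_divLR.
by under eq_bigr do rewrite mxE GC; rewrite sum_divn // (Gsum _ xl) mulnC.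
Qed.

Lemma tdetE k l n (M : 'M[nat]_(n * k, n * l)) : k <= l -> tdet M = tdet_le M.
Proof. by move=> kl; rewrite /tdet leq_mul2l kl orbT. Qed.

Lemma inD_entry_le k l m n (M : 'M[nat]_(n * k, n * l)) i j :
  inD k l m n M -> M i j <= m * l.
Proof. by case/andP=> /forallP/(_ i)/eqP <- _; rewrite (bigD1 j) //= leq_addr. Qed.

Lemma Lkl_le_tdet k l m n (M : 'M[nat]_(n * k, n * l)) : k <= l ->
  inD k l m n M -> Lkl k l m n <= tdet_le M.
Proof.
move=> kl MD; pose M' : 'M['I_(m * l).+1]_(n * k, n * l) :=
  (\matrix_(i, j) inord (M i j))%R.
have M'E : map_mx val M' = M.
  apply/matrixP => i j; rewrite !mxE.
  by apply: inordK; rewrite ltnS (inD_entry_le i j MD).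
by rewrite -(tdetE M kl) -M'E; apply: big_minn_leq (mem_index_enum M') _; rewrite M'E.
Qed.

Lemma leq_Lkl_tdet k l m n b : k <= l ->
    (forall M : 'M[nat]_(n * k, n * l), inD k l m n M -> b <= tdet_le M) ->
    b <= n * k * (m * l) ->
  b <= Lkl k l m n.
Proof.
move=> kl bM b0; apply: (big_ind (fun x => b <= x)) => // [x y bx by'|A AD].
  by rewrite leq_min bx by'.
by rewrite tdetE // bM.
Qed.

Lemma Lkl_le_blowup_cover k l m n G (x y : nat -> nat) : 0 < k <= l ->
    (forall a g, G a g = G g a) -> (forall a, a < n -> \sum_(g < n) G a g = m) ->
    (forall a g, G a g <= x a + y g) ->
  Lkl k l m n <= k * \sum_(a < n) x a + l * \sum_(g < n) y g.
Proof.
case/andP=> k0 kl GC Gsum Gxy; have l0 := leq_trans k0 kl.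
apply: leq_trans (Lkl_le_tdet kl (blowup_inD k0 l0 GC Gsum)) _.
rewrite -!sum_divn //; apply: tdet_le_leq_cover => i j; rewrite mxE; exact: Gxy.
Qed.

Lemma tdet_le_inD_lower_bound k l m n q r (M : 'M[nat]_(n * k, n * l)) :
    0 < k <= l -> 0 < n -> m = q * n + r -> inD k l m n M ->
  n * k * q + minn (n * k) (r * (k + l)) <= tdet_le M.
Proof.
case/andP=> k0 kl n0 mE /andP[/forallP rows /forallP cols].
have le_st : n * k <= n * l by rewrite leq_mul2l kl orbT.
have [u [v [uv uvM]]] := tdet_le_cover M le_st.
apply: leq_trans uvM; rewrite mulnDr [r * k + _]addnC.
apply: cover_sum_lower_bound => [|i|j]; first by rewrite muln_gt0 n0 k0.
  have -> : n * l * q + r * l = m * l by rewrite mE mulnDl [n * l * q]mulnC mulnA.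
  by rewrite -(eqP (rows i)); apply: leq_sum_add_const.
have -> : n * k * q + r * k = m * k by rewrite mE mulnDl [n * k * q]mulnC mulnA.
rewrite -(eqP (cols j)) addnC; apply: leq_sum_add_const => i; rewrite addnC; exact: uv.
Qed.

Lemma leq_Lkl k l m n q r : 0 < k <= l -> 0 < n -> 0 < r -> m = q * n + r ->
  n * k * q + minn (n * k) (r * (k + l)) <= Lkl k l m n.
Proof.
move=> kl n0 r0 mE; have /andP[k0 le_kl] := kl.
apply: (leq_Lkl_tdet le_kl) => [M MD|]; first exact: tdet_le_inD_lower_bound kl n0 mE MD.
have qm : q < m by rewrite mE -addn1 leq_add ?leq_pmulr.
apply: leq_trans (_ : n * k * m <= _); last first.
  by rewrite leq_mul2l leq_pmulr ?orbT // (leq_trans k0 le_kl).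
apply: leq_trans (_ : n * k * q.+1 <= _); last by rewrite leq_mul2l qm orbT.
by rewrite mulnS addnC leq_add2r geq_minl.
Qed.

Lemma Lkl_leq k l m n q r : 0 < k <= l -> 0 < r < n -> n <= r * (q + 2) ->
    m = q * n + r ->
  Lkl k l m n <= n * k * q + minn (n * k) (r * (k + l)).
Proof.
move=> kl /andP[r0 rn] hn mE; have n0 : 0 < n := leq_ltn_trans (leq0n r) rn.
have [nk_le|le_nk] := leqP (n * k) (r * (k + l)).
  apply: leq_trans (Lkl_le_blowup_cover (x := fun=> q.+1) (y := fun=> 0) kl
    (@circulantC n q r) _ _) _.
  - by move=> a _; rewrite sum_circulant ?(ltnW rn) // mE.
  - by move=> a g; rewrite /circulant /= addn0 -[q.+1]addn1 leq_add2l leq_b1.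
  - by rewrite !big_const_ord !iter_addn_0; lia.
apply: leq_trans (Lkl_le_blowup_cover (x := fun a => q + (a < r))
  (y := fun g => g < r : nat) kl (@corner_circulantC n q r) _ _) _.
- by move=> a _; rewrite sum_corner_circulant ?r0 ?rn // mE.
- by move=> a g; apply: corner_circulant_cover n0.
- by rewrite big_split /= big_const_ord iter_addn_0 !sum_ord_ltn ?(ltnW rn) //; lia.
Qed.

Unset Implicit Arguments.

Theorem corollary4p2 (k l n m q r : nat) :
  0 < k -> k <= l -> coprime k l -> 1 <= n ->
  m = q * n + r -> r < n ->
  n <= r * (q + 2) ->
  Lkl k l m n = n * k * q + minn (n * k) (r * (k + l)).
Proof.
move=> k0 kl _ n0 mE rn hn.
have r0 : 0 < r by move: hn; case: (r) => //; rewrite mul0n; lia.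
have kl' : 0 < k <= l by rewrite k0.
apply/eqP; rewrite eqn_leq leq_Lkl // andbT.
by apply: Lkl_leq; rewrite ?r0.
Qed.
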